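(* Let $A$ be a semiprime $2$-torsion free associative algebra and let $Q$ be a subalgebra of $Q_s(A)$ containing $A$. Then $A^{(-)}/Z(A)$ and $Q^{(-)}/Z(Q)$ are semiprime Lie algebras, the natural map $A^{(-)}/Z(A)\to Q^{(-)}/Z(Q)$ is injective, and (identifying $A^{(-)}/Z(A)$ with its image) $Q^{(-)}/Z(Q)$ is a Lie algebra of quotients of $A^{(-)}/Z(A)$.
   Context: Algebras are over a commutative unital ring $\Phi$; associative algebras need not be unital. For an associative algebra $A$, $A^{(-)}$ is the Lie algebra with the same module and bracket $[x,y]=xy-yx$; $Z(A)$ is the center. $A$ is $2$-torsion free if $2x=0$ implies $x=0$. For semiprime $A$, $Q^l_{\max}(A)$ denotes the maximal left (Utumi) quotient algebra and $Q_s(A)$ the Martindale symmetric algebra of quotients, which consists of those $q\in Q^l_{\max}(A)$ for which there is an essential ideal $I$ of $A$ with $Iq+qI\subseteq A$. A Lie algebra $L$ is semiprime if $[I,I]\neq 0$ for each nonzero ideal $I$. For a Lie subalgebra $L\subseteq Q$, $Q$ is an algebra of quotients of $L$ if for every nonzero $q\in Q$ there is an ideal $I$ of $L$ with $\mathrm{Ann}_L(I)=0$ (where $\mathrm{Ann}_L(I)=\{a\in L:[a,I]=0\}$) and $0\ne[I,q]\subseteq L$. *)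

From HB Require Import structures.
From mathcomp Require Import all_boot all_order all_algebra.
Set Implicit Arguments. Unset Strict Implicit. Unset Printing Implicit Defensive.
Import GRing.Theory.
Local Open Scope ring_scope.

Definition vset (V : Type) := V -> Prop.

Section Defs.
Variables (Phi : comPzRingType) (V : lmodType Phi) (mul : V -> V -> V).

Definition is_assoc_alg : Prop :=
  [/\ forall x y z, mul x (mul y z) = mul (mul x y) z,
      forall x y z, mul (x + y) z = mul x z + mul y z,
      forall x y z, mul x (y + z) = mul x y + mul x z,
      forall (a : Phi) x y, mul (a *: x) y = a *: mul x y &
      forall (a : Phi) x y, mul x (a *: y) = a *: mul x y].

Definition submod (S : vset V) : Prop :=
  [/\ S 0, forall x y, S x -> S y -> S (x + y) &
      forall (a : Phi) x, S x -> S (a *: x)].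

Definition subalg (S : vset V) : Prop :=
  submod S /\ forall x y, S x -> S y -> S (mul x y).

Definition alg_ideal (A I : vset V) : Prop :=
  [/\ submod I, (forall x, I x -> A x),
      (forall a x, A a -> I x -> I (mul a x)) &
      (forall a x, A a -> I x -> I (mul x a))].

Definition semiprime_alg (A : vset V) : Prop :=
  forall I, alg_ideal A I -> (forall x y, I x -> I y -> mul x y = 0) ->
    forall x, I x -> x = 0.

Definition two_torsion_free (A : vset V) : Prop :=
  forall x, A x -> x *+ 2 = 0 -> x = 0.

Definition essential_ideal (A I : vset V) : Prop :=
  alg_ideal A I /\
  forall J, alg_ideal A J -> (exists y, J y /\ y <> 0) ->
    exists x, I x /\ J x /\ x <> 0.

(* (V, mul) is (a copy of) the Martindale symmetric algebra of quotients
   Q_s(A) of the subalgebra A, via its standard characterization. *)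
Definition is_sym_quotients (A : vset V) : Prop :=
  [/\ subalg A,
      (forall q, exists I, essential_ideal A I /\
          forall x, I x -> A (mul x q) /\ A (mul q x)),
      (forall q I, essential_ideal A I ->
          ((forall x, I x -> mul x q = 0) \/ (forall x, I x -> mul q x = 0)) ->
          q = 0) &
      (forall I (f g : V -> V), essential_ideal A I ->
          (forall x, I x -> A (f x) /\ A (g x)) ->
          (forall x y, I x -> I y -> f (x + y) = f x + f y /\ g (x + y) = g x + g y) ->
          (forall (a : Phi) x, I x -> f (a *: x) = a *: f x /\ g (a *: x) = a *: g x) ->
          (forall x r, I x -> A r -> f (mul x r) = mul (f x) r) ->
          (forall x r, I x -> A r -> g (mul r x) = mul r (g x)) ->
          (forall x y, I x -> I y -> mul (g x) y = mul x (f y)) ->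
          exists q, forall x, I x -> f x = mul q x /\ g x = mul x q)].

Definition center (S : vset V) : vset V :=
  fun z => S z /\ forall a, S a -> mul z a = mul a z.

Definition lbr (x y : V) : V := mul x y - mul y x.

(* ---- Lie algebras of the form L/N, with L a Lie subalgebra of V^(-) and
   N an ideal of L.  An element of L/N is the class of some x with L x;
   x and y define the same class iff N (x - y).  A subset of L/N is
   represented by the saturated subset of L of the representatives of its
   elements. ---- *)

Definition lq_subset (L N J : vset V) : Prop :=
  (forall x, J x -> L x) /\
  (forall x y, J x -> L y -> N (x - y) -> J y).

Definition lq_ideal (L N J : vset V) : Prop :=
  [/\ lq_subset L N J, J 0,
      (forall x y, J x -> J y -> J (x + y)),
      (forall (a : Phi) x, J x -> J (a *: x)) &
      (forall a x, L a -> J x -> J (lbr a x))].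

Definition lq_is_zero (N J : vset V) : Prop := forall x, J x -> N x.

Definition lq_semiprime (L N : vset V) : Prop :=
  forall J, lq_ideal L N J -> ~ lq_is_zero N J ->
    exists x y, [/\ J x, J y & ~ N (lbr x y)].

Definition lq_ann_zero (S N J : vset V) : Prop :=
  forall a, S a -> (forall x, J x -> N (lbr a x)) -> N a.

Definition lq_algebra_of_quotients (L S N : vset V) : Prop :=
  forall q, L q -> ~ N q ->
    exists J, [/\ lq_ideal S N J, lq_ann_zero S N J,
                 (exists x, J x /\ ~ N (lbr x q)) &
                 (forall x, J x -> S (lbr x q))].

(* image of A^(-)/Z(A) in Q^(-)/Z(Q): representatives A + Z(Q) *)
Definition sum_set (A B : vset V) : vset V :=
  fun x => exists a b, [/\ A a, B b & x = a + b].

End Defs.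

From HB Require Import structures.
From mathcomp Require Import all_boot all_order all_algebra.
From Stdlib Require Import Classical.
Set Implicit Arguments. Unset Strict Implicit. Unset Printing Implicit Defensive.
Import GRing.Theory.
Local Open Scope ring_scope.

(* Everything rests on the Herstein-type fact that in a 2-torsion free
   semiprime algebra an element a with [a,[a,S]] = 0 is central: the inner
   derivation d = [a,-] then satisfies 2 d(x) d(y) = d^2(xy) = 0, so
   d(x) S d(x) = 0 and d(x) = 0 by semiprimeness.  If J is a Lie ideal of
   S/Z(S) with [J,J] = 0, this applies to every a in J, so J = 0.
   For Q between A and Q_s(A), semiprimeness and 2-torsion freeness pass
   from A to Q because every q has an essential denominator ideal of A, and
   the same argument shows that p in Q is central as soon as [p,I] is
   central for an essential ideal I of A.  The Lie ideal (I + Z(Q))/Z(Q),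
   with I a denominator ideal of q, then witnesses that Q/Z(Q) is a Lie
   algebra of quotients of (A + Z(Q))/Z(Q). *)

Section SumSet.
Variables (Phi : comPzRingType) (V : lmodType Phi).
Implicit Types (E F N : vset V) (x y : V).

Lemma submodN N x : submod N -> N x -> N (- x).
Proof. by case=> _ _ NZ Nx; rewrite -scaleN1r; apply: NZ. Qed.

Lemma submodB N x y : submod N -> N x -> N y -> N (x - y).
Proof. by move=> NN Nx Ny; case: (NN) => _ ND _; apply: ND => //; apply: submodN. Qed.

Lemma sum_set_l E N x : submod N -> E x -> sum_set E N x.
Proof. by case=> N0 _ _ Ex; exists x, 0; rewrite addr0. Qed.

Lemma sum_set_sub E F N x : (forall y, E y -> F y) -> sum_set E N x -> sum_set F N x.
Proof. by move=> EF [e [z [Ee Nz ->]]]; exists e, z; split => //; apply: EF. Qed.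

Lemma submod_sum_set E N : submod E -> submod N -> submod (sum_set E N).
Proof.
move=> [E0 ED EZ] [N0 ND NZ]; split.
- by exists 0, 0; rewrite addr0.
- move=> _ _ [e1 [z1 [Ee1 Nz1 ->]]] [e2 [z2 [Ee2 Nz2 ->]]].
  by exists (e1 + e2), (z1 + z2); split; [apply: ED | apply: ND | apply: addrACA].
- move=> c _ [e [z [Ee Nz ->]]].
  by exists (c *: e), (c *: z); split; [apply: EZ | apply: NZ | apply: scalerDr].
Qed.

Lemma sum_set_saturated E N x y :
  submod N -> sum_set E N x -> N (x - y) -> sum_set E N y.
Proof.
move=> NN [e [z [Ee Nz ->]]] Nxy; exists e, (z - (e + z - y)); split => //.
- exact: submodB.
- by rewrite opprB addrA addrCA subrr addr0.
Qed.

End SumSet.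

Section AssocAlgebra.
Variables (Phi : comPzRingType) (V : lmodType Phi) (mul : V -> V -> V).
Hypothesis mulV : is_assoc_alg mul.
Local Notation br := (lbr mul).

Lemma mulA x y z : mul x (mul y z) = mul (mul x y) z.
Proof. by case: mulV. Qed.
Lemma mulDl x y z : mul (x + y) z = mul x z + mul y z.
Proof. by case: mulV. Qed.
Lemma mulDr x y z : mul x (y + z) = mul x y + mul x z.
Proof. by case: mulV. Qed.
Lemma mulZl a x y : mul (a *: x) y = a *: mul x y.
Proof. by case: mulV. Qed.
Lemma mulZr a x y : mul x (a *: y) = a *: mul x y.
Proof. by case: mulV. Qed.
Lemma mul0l y : mul 0 y = 0.
Proof. by rewrite -(scale0r (0 : V)) mulZl !scale0r. Qed.
Lemma mul0r y : mul y 0 = 0.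
Proof. by rewrite -(scale0r (0 : V)) mulZr !scale0r. Qed.
Lemma mulNl x y : mul (- x) y = - mul x y.
Proof. by rewrite -scaleN1r mulZl scaleN1r. Qed.
Lemma mulNr x y : mul x (- y) = - mul x y.
Proof. by rewrite -scaleN1r mulZr scaleN1r. Qed.
Lemma mulBl x y z : mul (x - y) z = mul x z - mul y z.
Proof. by rewrite mulDl mulNl. Qed.
Lemma mulBr x y z : mul z (x - y) = mul z x - mul z y.
Proof. by rewrite mulDr mulNr. Qed.
Lemma mulMn2r x y : mul y (x *+ 2) = mul y x *+ 2.
Proof. by rewrite !mulr2n mulDr. Qed.

Lemma lbrN x y : br x y = - br y x.
Proof. by rewrite /lbr opprB. Qed.
Lemma lbrDl a u v : br (u + v) a = br u a + br v a.
Proof. by rewrite /lbr mulDr mulDl opprD addrACA. Qed.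
Lemma lbrDr a u v : br a (u + v) = br a u + br a v.
Proof. by rewrite /lbr mulDr mulDl opprD addrACA. Qed.
Lemma lbrMn2l x y : br (x *+ 2) y = br x y *+ 2.
Proof. by rewrite /lbr !mulr2n mulDl mulDr opprD addrACA. Qed.
Lemma lbrM a x y : br a (mul x y) = mul (br a x) y + mul x (br a y).
Proof. by rewrite /lbr mulBl mulBr !mulA addrA subrK. Qed.
Lemma lbrMl a y : br a (mul y a) = mul (br a y) a.
Proof. by rewrite /lbr mulBl !mulA. Qed.
Lemma lbr_eq0 x y : br x y = 0 -> mul x y = mul y x.
Proof. exact: subr0_eq. Qed.

Lemma subalgM (S : vset V) x y : subalg mul S -> S x -> S y -> S (mul x y).
Proof. by case=> _ SM; apply: SM. Qed.
Lemma subalg_lbr (S : vset V) x y : subalg mul S -> S x -> S y -> S (br x y).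
Proof. by move=> hS Sx Sy; apply: submodB hS.1 _ _; apply: subalgM. Qed.
Lemma alg_ideal_sub (S I : vset V) x : alg_ideal mul S I -> I x -> S x.
Proof. by case=> _ IS _ _; apply: IS. Qed.

Lemma center_sub (S : vset V) z : center mul S z -> S z.
Proof. by case. Qed.
Lemma center_comm (S : vset V) z a : center mul S z -> S a -> mul a z = mul z a.
Proof. by case=> _ hz Sa; rewrite hz. Qed.
Lemma center_lbrl (S : vset V) z y : center mul S z -> S y -> br z y = 0.
Proof. by move=> Zz Sy; rewrite /lbr (center_comm Zz Sy) subrr. Qed.
Lemma center_lbrr (S : vset V) z y : center mul S z -> S y -> br y z = 0.
Proof. by move=> Zz Sy; rewrite lbrN (center_lbrl Zz Sy) oppr0. Qed.

Lemma submod_center (S : vset V) : submod S -> submod (center mul S).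
Proof.
case=> S0 SD SZ; split.
- by split=> // a _; rewrite mul0l mul0r.
- move=> x y [Sx hx] [Sy hy]; split; first exact: SD.
  by move=> a Sa; rewrite mulDl mulDr hx // hy.
- move=> c x [Sx hx]; split; first exact: SZ.
  by move=> a Sa; rewrite mulZl mulZr hx.
Qed.

Lemma lbr_add_center (S : vset V) x y w z : S x -> S y ->
  center mul S w -> center mul S z -> br (x + w) (y + z) = br x y.
Proof.
move=> Sx Sy Zw Zz.
rewrite lbrDl !lbrDr (center_lbrr Zz Sx) (center_lbrl Zw Sy).
by rewrite (center_lbrl Zw (center_sub Zz)) !addr0.
Qed.

Section Semiprime.
Variable S : vset V.
Hypotheses (S_subalg : subalg mul S) (S_semiprime : semiprime_alg mul S).

Definition ideal_span (b : V) : vset V :=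
  fun x => forall J, alg_ideal mul S J -> J b -> J x.

Definition left_ann (I : vset V) : vset V :=
  fun x => S x /\ forall y, I y -> mul x y = 0.

Definition right_ann_rideal (b : V) : vset V :=
  fun y => [/\ S y, mul b y = 0 & forall a, S a -> mul b (mul a y) = 0].

Lemma alg_ideal_full : alg_ideal mul S S.
Proof.
split=> //; first exact: S_subalg.1.
all: by move=> a x Sa Sx; apply: subalgM.
Qed.

Lemma alg_ideal_span b : S b -> alg_ideal mul S (ideal_span b).
Proof.
move=> Sb; split; [split|..].
- by move=> J [[]].
- by move=> x y hx hy J hJ Jb; case: (hJ) => -[_ JD _] _ _ _; apply: JD; [apply: hx | apply: hy].
- by move=> c x hx J hJ Jb; case: (hJ) => -[_ _ JZ] _ _ _; apply: JZ; apply: hx.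
- by move=> x hx; apply: hx alg_ideal_full Sb.
- by move=> a x Sa hx J hJ Jb; case: (hJ) => _ _ JL _; apply: JL => //; apply: hx.
- by move=> a x Sa hx J hJ Jb; case: (hJ) => _ _ _ JR; apply: JR => //; apply: hx.
Qed.

Lemma alg_ideal_left_ann I : alg_ideal mul S I -> alg_ideal mul S (left_ann I).
Proof.
move=> [[_ _ _] _ IL _]; case: S_subalg => -[S0 SD SZ] SM.
split; [split|..].
- by split=> // y _; rewrite mul0l.
- move=> x y [Sx hx] [Sy hy]; split; first exact: SD.
  by move=> w Iw; rewrite mulDl hx // hy // addr0.
- move=> c x [Sx hx]; split; first exact: SZ.
  by move=> w Iw; rewrite mulZl hx // scaler0.
- by move=> x [].
- move=> a x Sa [Sx hx]; split; first exact: SM.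
  by move=> w Iw; rewrite -mulA hx // mul0r.
- move=> a x Sa [Sx hx]; split; first exact: SM.
  by move=> w Iw; rewrite -mulA hx //; apply: IL.
Qed.

Lemma alg_ideal_right_ann_rideal b : alg_ideal mul S (right_ann_rideal b).
Proof.
case: S_subalg => -[S0 SD SZ] SM; split; [split|..].
- by split=> //; rewrite ?mul0r // => a _; rewrite !mul0r.
- move=> x y [Sx bx hx] [Sy by' hy]; split; first exact: SD.
    by rewrite mulDr bx by' addr0.
  by move=> a Sa; rewrite !mulDr hx // hy // addr0.
- move=> c x [Sx bx hx]; split; first exact: SZ.
    by rewrite mulZr bx scaler0.
  by move=> a Sa; rewrite !mulZr hx // scaler0.
- by move=> x [].
- move=> a x Sa [Sx bx hx]; split; [exact: SM | exact: hx |].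
  by move=> a' Sa'; rewrite (mulA a') hx //; apply: SM.
- move=> a x Sa [Sx bx hx]; split; first exact: SM.
    by rewrite mulA bx mul0l.
  by move=> a' Sa'; rewrite !mulA -(mulA b) hx // mul0l.
Qed.

(* The ideal generated by b lies in right_ann_rideal b, hence b kills it
   and it squares to zero. *)
Lemma semiprime_sandwich_sq0 b : S b -> mul b b = 0 ->
  (forall a, S a -> mul b (mul a b) = 0) -> b = 0.
Proof.
move=> Sb bb bSb.
have span_ann : forall y, ideal_span b y -> mul b y = 0.
  by move=> y Iy; have [] := Iy _ (alg_ideal_right_ann_rideal b).
have span_lann : forall x, ideal_span b x -> left_ann (ideal_span b) x.
  by move=> x Ix; apply: Ix; [apply/alg_ideal_left_ann/alg_ideal_span | split].
apply: (S_semiprime (alg_ideal_span Sb)); last by move=> J.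
by move=> x y Ix Iy; apply: (span_lann x Ix).2.
Qed.

Lemma semiprime_sandwich b : S b -> (forall a, S a -> mul b (mul a b) = 0) -> b = 0.
Proof.
move=> Sb bSb; apply: semiprime_sandwich_sq0 => //.
have Sbb : S (mul b b) by apply: subalgM.
apply: semiprime_sandwich_sq0 => [//||a Sa].
  by rewrite -mulA bSb // mul0r.
by rewrite -mulA (mulA a b b) (mulA b (mul a b) b) (bSb a Sa) mul0l mul0r.
Qed.

Lemma center_sq0 c : center mul S c -> mul c c = 0 -> c = 0.
Proof.
move=> Zc cc; apply: semiprime_sandwich (center_sub Zc) _ => a Sa.
by rewrite (center_comm Zc Sa) mulA cc mul0l.
Qed.

Hypothesis S_2tf : two_torsion_free S.

Lemma center_of_lbr_lbr0 a : S a ->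
  (forall x, S x -> br a (br a x) = 0) -> center mul S a.
Proof.
move=> Sa d2.
have Sd : forall x, S x -> S (br a x) by move=> x; apply: subalg_lbr.
have dMd : forall x y, S x -> S y -> mul (br a x) (br a y) = 0.
  move=> x y Sx Sy; apply: S_2tf; first exact: subalgM S_subalg (Sd _ Sx) (Sd _ Sy).
  have := d2 _ (subalgM S_subalg Sx Sy).
  by rewrite lbrM lbrDr !lbrM !d2 // mul0l mul0r add0r addr0 -mulr2n.
have dSd : forall x z y, S x -> S z -> S y -> mul (br a x) (mul z (br a y)) = 0.
  move=> x z y Sx Sz Sy; have := dMd _ _ Sx (subalgM S_subalg Sz Sy).
  by rewrite lbrM mulDr mulA dMd // mul0l add0r.
split=> // b Sb; apply: lbr_eq0.
by apply: semiprime_sandwich (Sd _ Sb) _ => z Sz; apply: dSd.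
Qed.

Lemma lq_semiprime_center : lq_semiprime mul S (center mul S).
Proof.
move=> J [[JS _] _ _ JZ JL] J_nz; apply: NNPP => J_abelian; apply: J_nz => a Ja.
have JJ : forall x y, J x -> J y -> center mul S (br x y).
  by move=> x y Jx Jy; apply: NNPP => ?; apply: J_abelian; exists x, y.
have Sa := JS _ Ja.
have Jd : forall x, S x -> J (br a x).
  by move=> x Sx; rewrite lbrN -scaleN1r; apply: JZ; apply: JL.
apply: center_of_lbr_lbr0 => // x Sx.
set c := br a (br a x).
have Zc : center mul S c by apply: JJ => //; apply: Jd.
(* c a = [a,[a,x a]] is central as well, so c kills every [a,y]. *)
have Zca : center mul S (mul c a).
  by rewrite /c -!lbrMl; apply: JJ Ja (Jd _ (subalgM S_subalg Sx Sa)).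
have c_lbr : forall y, S y -> mul c (br a y) = 0.
  move=> y Sy; rewrite /lbr mulBr mulA -(center_comm Zca Sy).
  by rewrite mulA (center_comm Zc Sy) -mulA subrr.
by apply: center_sq0 Zc _; apply: c_lbr; apply: subalg_lbr S_subalg Sa Sx.
Qed.

End Semiprime.

Section SymmetricQuotients.
Variables A Q : vset V.
Hypotheses (A_symq : is_sym_quotients mul A) (A_semiprime : semiprime_alg mul A).
Hypotheses (A_2tf : two_torsion_free A).
Hypotheses (Q_subalg : subalg mul Q) (A_sub_Q : forall x, A x -> Q x).

Lemma subalg_symq : subalg mul A.
Proof. by case: A_symq. Qed.

Lemma symq_denominator q : exists I, essential_ideal mul A I /\
  forall x, I x -> A (mul x q) /\ A (mul q x).
Proof. by case: A_symq => _ den _ _; apply: den. Qed.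

Lemma symq_left_ann_eq0 I q : essential_ideal mul A I ->
  (forall x, I x -> mul x q = 0) -> q = 0.
Proof. by case: A_symq => _ _ ann _ hI Iq; apply: ann hI _; left. Qed.

Lemma symq_right_ann_eq0 I q : essential_ideal mul A I ->
  (forall x, I x -> mul q x = 0) -> q = 0.
Proof. by case: A_symq => _ _ ann _ hI Iq; apply: ann hI _; right. Qed.

Lemma symq_comm p : (forall x, A x -> mul x p = mul p x) ->
  forall q, mul p q = mul q p.
Proof.
move=> Cp q; have [I [hI Iq]] := symq_denominator q.
apply: subr0_eq; apply: (symq_right_ann_eq0 hI) => e Ie.
have [_ Aqe] := Iq e Ie.
by rewrite mulBl -!mulA -(Cp _ Aqe) -(Cp _ (alg_ideal_sub hI.1 Ie)) mulA subrr.
Qed.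

Lemma center_sub_center_symq z : center mul A z -> center mul Q z.
Proof.
move=> [Az Cz]; split; first exact: A_sub_Q.
by move=> a Qa; apply: symq_comm => x Ax; rewrite Cz.
Qed.

Lemma center_symq_sub_center z : A z -> center mul Q z -> center mul A z.
Proof. by move=> Az [_ Cz]; split=> // a Aa; apply/Cz/A_sub_Q. Qed.

Lemma semiprime_symq : semiprime_alg mul Q.
Proof.
move=> I [[I0 ID IZ] IQ IL IR] II x Ix.
have [E [hE Ex]] := symq_denominator x.
pose IA y := A y /\ I y.
have IA_ideal : alg_ideal mul A IA.
  case: subalg_symq => -[A0 AD AZ] AM; split; [split|..].
  - by split.
  - by move=> u v [Au Iu] [Av Iv]; split; [apply: AD | apply: ID].
  - by move=> c u [Au Iu]; split; [apply: AZ | apply: IZ].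
  - by move=> u [].
  - by move=> a u Aa [Au Iu]; split; [apply: AM | apply: IL => //; apply: A_sub_Q].
  - by move=> a u Aa [Au Iu]; split; [apply: AM | apply: IR => //; apply: A_sub_Q].
have IA0 : forall y, IA y -> y = 0.
  by apply: A_semiprime IA_ideal _ => u v [_ Iu] [_ Iv]; apply: II.
apply: (symq_left_ann_eq0 hE) => e Ee; apply: IA0; split; first by case: (Ex e Ee).
by apply: IL => //; apply/A_sub_Q/(alg_ideal_sub hE.1).
Qed.

Lemma two_torsion_free_symq : two_torsion_free Q.
Proof.
move=> x _ x2; have [E [hE Ex]] := symq_denominator x.
apply: (symq_left_ann_eq0 hE) => e Ee; apply: A_2tf; first by case: (Ex e Ee).
by rewrite -mulMn2r x2 mul0r.
Qed.

Lemma center_symq_of_Mn2 z : Q z -> center mul Q (z *+ 2) -> center mul Q z.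
Proof.
move=> Qz Z2z; split=> // y Qy; apply: lbr_eq0.
apply: two_torsion_free_symq; first exact: subalg_lbr.
by rewrite -lbrMn2l; apply: center_lbrl Z2z Qy.
Qed.

Lemma center_symq_of_lbr_essential I p : essential_ideal mul A I -> Q p ->
  (forall i, I i -> center mul Q (br p i)) -> center mul Q p.
Proof.
move=> hI Qp Zp.
have IQ : forall i, I i -> Q i by move=> i /(alg_ideal_sub hI.1); apply: A_sub_Q.
have [[_ _ IL _] _] := hI.
have lbr_I0 : forall i, I i -> br p i = 0.
  move=> i Ii; set c := br p i; have Zc : center mul Q c by apply: Zp.
  (* [p, i i] = c i + i c = 2 c i *)
  have Zci : center mul Q (mul c i).
    apply: center_symq_of_Mn2; first by apply: subalgM => //; [case: Zc | apply: IQ].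
    have := Zp _ (IL _ _ (alg_ideal_sub hI.1 Ii) Ii).
    by rewrite lbrM -/c (center_comm Zc (IQ _ Ii)) mulr2n.
  apply: (center_sq0 Q_subalg semiprime_symq Zc).
  rewrite {2}/c /lbr mulBr mulA -(center_comm Zc Qp) -mulA.
  by rewrite (center_comm Zci Qp) mulA subrr.
have Cp : forall x, A x -> mul x p = mul p x.
  move=> x Ax; apply/esym/subr0_eq.
  apply: (symq_right_ann_eq0 hI) => i Ii.
  rewrite mulBl -!mulA (lbr_eq0 (lbr_I0 _ Ii)).
  by rewrite (lbr_eq0 (lbr_I0 _ (IL _ _ Ax Ii))) mulA subrr.
by split=> // a _; apply: symq_comm.
Qed.

Local Notation ZQ := (center mul Q).
Local Notation AZ := (sum_set A ZQ).

Lemma lq_ideal_sum_center E : alg_ideal mul A E -> lq_ideal mul AZ ZQ (sum_set E ZQ).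
Proof.
move=> [E_submod EA EL ER].
have ZQ_submod := submod_center Q_subalg.1.
have [EZ0 EZD EZZ] := submod_sum_set E_submod ZQ_submod.
split=> //.
- split=> [x|x y Ex _]; first exact: sum_set_sub.
  exact: sum_set_saturated.
- move=> _ _ [a [w [Aa Zw ->]]] [e [z [Ee Zz ->]]].
  rewrite (lbr_add_center (A_sub_Q Aa) (A_sub_Q (EA _ Ee)) Zw Zz).
  by apply: sum_set_l => //; apply: submodB E_submod _ _; [exact: EL | exact: ER].
Qed.

Lemma lq_ann_zero_sum_center E : essential_ideal mul A E ->
  lq_ann_zero mul AZ ZQ (sum_set E ZQ).
Proof.
move=> hE _ [a [w [Aa Zw ->]]] ann.
have ZQ_submod := submod_center Q_subalg.1; have [Z0 ZD _] := ZQ_submod.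
suff Za : ZQ a by apply: ZD.
apply: (center_symq_of_lbr_essential hE (A_sub_Q Aa)) => i Ei.
have Qi : Q i := A_sub_Q (alg_ideal_sub hE.1 Ei).
rewrite -(lbr_add_center (A_sub_Q Aa) Qi Zw Z0).
by apply: ann; exists i, 0.
Qed.

Lemma lq_algebra_of_quotients_symq : lq_algebra_of_quotients mul Q AZ ZQ.
Proof.
move=> q Qq nZq; have [E [hE Eq]] := symq_denominator q.
have ZQ_submod := submod_center Q_subalg.1.
exists (sum_set E ZQ); split.
- exact: lq_ideal_sum_center hE.1.
- exact: lq_ann_zero_sum_center.
- apply: NNPP => Eq_central; apply: nZq.
  apply: (center_symq_of_lbr_essential hE Qq) => i Ei.
  rewrite lbrN; apply: (submodN ZQ_submod).
  by apply: NNPP => nZ; apply: Eq_central; exists i; split => //; apply: sum_set_l.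
- move=> _ [e [z [Ee Zz ->]]]; rewrite lbrDl (center_lbrl Zz Qq) addr0.
  apply: sum_set_l => //; have [Aeq Aqe] := Eq e Ee.
  exact: submodB subalg_symq.1 Aeq Aqe.
Qed.

End SymmetricQuotients.

End AssocAlgebra.

Theorem mainTheorem3 (Phi : comPzRingType) (V : lmodType Phi)
    (mul : V -> V -> V) (A Q : vset V) :
  is_assoc_alg mul ->
  is_sym_quotients mul A ->
  semiprime_alg mul A ->
  two_torsion_free A ->
  subalg mul Q -> (forall x, A x -> Q x) ->
  [/\ lq_semiprime mul A (center mul A),
      lq_semiprime mul Q (center mul Q),
      (forall z, center mul A z -> center mul Q z),
      (forall x y, A x -> A y -> center mul Q (x - y) -> center mul A (x - y)) &
      lq_algebra_of_quotients mul Q (sum_set A (center mul Q)) (center mul Q)].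
Proof.
move=> mulV A_symq A_semiprime A_2tf Q_subalg A_sub_Q.
have A_subalg := subalg_symq A_symq.
have Q_semiprime := semiprime_symq A_symq A_semiprime A_sub_Q.
have Q_2tf := two_torsion_free_symq mulV (Q := Q) A_symq A_2tf.
split.
- exact: (lq_semiprime_center mulV A_subalg A_semiprime A_2tf).
- exact: (lq_semiprime_center mulV Q_subalg Q_semiprime Q_2tf).
- exact: (center_sub_center_symq mulV A_symq A_sub_Q).
- move=> x y Ax Ay; apply: (center_symq_sub_center A_sub_Q).
  exact: submodB A_subalg.1 Ax Ay.
- exact: (lq_algebra_of_quotients_symq mulV A_symq A_semiprime A_2tf Q_subalg A_sub_Q).
Qed.
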